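(* Let $(X,U)$ be a minimizer of Problem 1 and let $(K,H,G,F)$ be the unique solution of $\begin{bmatrix} K & H \\ G & F \end{bmatrix}\begin{bmatrix} X \\ Z \end{bmatrix} = \begin{bmatrix} U \\ V \end{bmatrix}$. Then the dynamic state feedback $z(t+1)=Fz(t)+Gx(t)$, $u(t)=Hz(t)+Kx(t)$ is an $N$-step deadbeat controller for the plant $x(t+1)=Ax(t)+Bu(t)$: the closed-loop matrix $\mathcal{A}_{cl}=\begin{bmatrix}A+BK & BH\\ G & F\end{bmatrix}$ is nilpotent with $\mathcal{A}_{cl}^N=0$ (all its eigenvalues are $0$), so that for every initial state $(x(0),z(0))$ the closed-loop state satisfies $(x(t),z(t))=0$ for all $t\ge N$.
   Context: Plant: $x(t+1)=Ax(t)+Bu(t)$, $y(t)=Cx(t)+Du(t)$ with $x\in\mathbb{R}^n$, $u\in\mathbb{R}^m$, $y\in\mathbb{R}^p$, $(A,B)$ reachable, horizon $N\ge 2$. $P\in\mathbb{R}^{N\times N}$ is the nilpotent shift matrix $P=\begin{bmatrix}0 & 0\\ I_{N-1} & 0\end{bmatrix}$; $\otimes$ is the Kronecker product; $\mathrm{e}_1\in\mathbb{R}^N$ is the first standard basis vector; $\|W\|_1=\sum_{i,j}|w_{ij}|$; $\mathrm{abs}(W)$ is entrywise absolute value; $\mathbf{1}_k$ is the all-ones vector. Given $s\in\mathbb{R}^p$, Problem 1 is: minimize $\|U\|_1$ over $X\in\mathbb{R}^{n\times nN}$, $U\in\mathbb{R}^{m\times nN}$ subject to $AX+BU=X(P\otimes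 I_n)$, $X(\mathrm{e}_1\otimes I_n)=I_n$, and $\mathrm{abs}(CX+DU)\le s(\mathbf{1}_n\otimes\mathbf{1}_N)^\top$ entrywise. $Z=\begin{bmatrix}0_{n(N-1)\times n} & I_{n(N-1)}\end{bmatrix}$, $V=Z(P\otimes I_n)$. *)

From HB Require Import structures.
From mathcomp Require Import all_boot all_order all_algebra.
From mathcomp Require Export mxtens.
Set Implicit Arguments. Unset Strict Implicit. Unset Printing Implicit Defensive.
Import Order.TTheory GRing.Theory Num.Theory.
Local Open Scope ring_scope.

Section Defs.
Variable R : realFieldType.

Definition reachable (n m : nat) (A : 'M[R]_n) (B : 'M[R]_(n, m)) : bool :=
  \rank (\mxrow_(i < n) (A ^+ i *m B)) == n.

Definition shiftP (N : nat) : 'M[R]_N := \matrix_(i, j) ((i : nat) == (j : nat).+1)%N%:R.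

Definition e1 (N : nat) : 'cV[R]_N := \col_i ((i : nat) == 0%N)%:R.

(* Z = [0_{n(N-1) x n}  I_{n(N-1)}] : R^{n(N-1) x nN} *)
Definition Zmx (n N : nat) : 'M[R]_(n * (N - 1), N * n) :=
  \matrix_(i, j) ((j : nat) == (i : nat) + n)%N%:R.

Definition Vmx (n N : nat) : 'M[R]_(n * (N - 1), N * n) :=
  Zmx n N *m (tensmx (shiftP N) (1%:M : 'M[R]_n)).

Definition norm1 (p q : nat) (W : 'M[R]_(p, q)) : R := \sum_i \sum_j `|W i j|.

Definition feasible1 (n m p N : nat) (A : 'M[R]_n) (B : 'M[R]_(n, m))
  (C : 'M[R]_(p, n)) (D : 'M[R]_(p, m)) (s : 'cV[R]_p)
  (X : 'M[R]_(n, N * n)) (U : 'M[R]_(m, N * n)) : Prop :=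
  [/\ A *m X + B *m U = X *m tensmx (shiftP N) (1%:M : 'M[R]_n),
      X *m castmx (erefl, mul1n n) (tensmx (e1 N) (1%:M : 'M[R]_n)) = 1%:M
    & forall i j, `|(C *m X + D *m U) i j| <= s i 0].

Definition minimizer1 (n m p N : nat) (A : 'M[R]_n) (B : 'M[R]_(n, m))
  (C : 'M[R]_(p, n)) (D : 'M[R]_(p, m)) (s : 'cV[R]_p)
  (X : 'M[R]_(n, N * n)) (U : 'M[R]_(m, N * n)) : Prop :=
  feasible1 A B C D s X U /\
  forall (X' : 'M[R]_(n, N * n)) (U' : 'M[R]_(m, N * n)), feasible1 A B C D s X' U' -> norm1 U <= norm1 U'.

End Defs.

From HB Require Import structures.
From mathcomp Require Import all_boot all_order all_algebra.
From mathcomp Require Import mxtens.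
Set Implicit Arguments. Unset Strict Implicit. Unset Printing Implicit Defensive.
Import Order.TTheory GRing.Theory Num.Theory.
Local Open Scope ring_scope.

(* Write S := P (x) I_n for the block shift and M := [X; Z] for the stacked
   matrix built from a feasible X.  The constraint A X + B U = X S together
   with the defining equations K X + H Z = U and G X + F Z = V = Z S gives the
   intertwining relation  Acl M = M S.  Hence Acl^N M = M S^N = 0, because the
   shift P, and thus S, is nilpotent of index N.  Finally M has a right inverse
   (X e_1-block = I, Z selects the last n(N-1) coordinates), so M is row-free
   and Acl^N M = 0 forces Acl^N = 0.  Nilpotency then yields that every
   eigenvalue of Acl is 0 and that every closed-loop trajectory, being
   w(t) = Acl^t w(0), vanishes from time N on. *)

Section DeltaSums.
Variable R : pzSemiRingType.

Lemma sum_delta k (f : 'I_k -> R) c (lt_ck : (c < k)%N) :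
  \sum_(l < k) f l * ((l : nat) == c)%:R = f (Ordinal lt_ck).
Proof.
rewrite (bigD1 (Ordinal lt_ck)) //= eqxx mulr1 big1 ?addr0 // => l.
by rewrite -val_eqE /= => /negbTE ->; rewrite mulr0.
Qed.

Lemma sum_delta_out k (f : 'I_k -> R) c (le_kc : (k <= c)%N) :
  \sum_(l < k) f l * ((l : nat) == c)%:R = 0.
Proof.
rewrite big1 // => l _.
have /negbTE -> : (l : nat) != c by rewrite neq_ltn (leq_trans (ltn_ord l) le_kc).
by rewrite mulr0.
Qed.

End DeltaSums.

Section RingMatrixFacts.
Variable R : comPzRingType.

Lemma tensmx_expS m n (A : 'M[R]_m) (B : 'M[R]_n) k :
  (A *t B) ^+ k.+1 = (A ^+ k.+1) *t (B ^+ k.+1).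
Proof.
elim: k => [|k IH]; first by rewrite !expr1.
by rewrite exprSr -mulmxE IH tensmx_mul !mulmxE -!exprSr.
Qed.

Lemma intertwine_exp p q (A : 'M[R]_p) (S : 'M[R]_q) (M : 'M[R]_(p, q)) k :
  A *m M = M *m S -> A ^+ k *m M = M *m S ^+ k.
Proof.
move=> AM; elim: k => [|k IH]; first by rewrite !expr0 mul1mx mulmx1.
by rewrite !exprSr -!mulmxE -mulmxA AM mulmxA IH mulmxA.
Qed.

Lemma nilpotent_trajectory p (A : 'M[R]_p) k (w : nat -> 'cV[R]_p) :
  A ^+ k = 0 -> (forall t, w t.+1 = A *m w t) ->
  forall t, (k <= t)%N -> w t = 0.
Proof.
move=> Ak step.
have wE t : w t = A ^+ t *m w 0%N.
  elim: t => [|t IH]; first by rewrite expr0 mul1mx.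
  by rewrite step IH exprS -mulmxE mulmxA.
by move=> t /subnK <-; rewrite wE exprD Ak mulr0 mul0mx.
Qed.

End RingMatrixFacts.

Section FieldMatrixFacts.
Variable F : fieldType.

Lemma intertwine_nilpotent p q (A : 'M[F]_p) (S : 'M[F]_q) (M : 'M[F]_(p, q)) k :
  row_free M -> A *m M = M *m S -> S ^+ k = 0 -> A ^+ k = 0.
Proof.
move=> freeM AM Sk; apply/eqP; rewrite -(mulmx_free_eq0 _ freeM).
by rewrite (intertwine_exp k AM) Sk mulmx0.
Qed.

Lemma nilpotent_eigenvalue p (A : 'M[F]_p) k a :
  A ^+ k = 0 -> eigenvalue A a -> a = 0.
Proof.
move=> Ak /eigenvalueP [v vA nz_v].
have vAk j : v *m A ^+ j = a ^+ j *: v.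
  elim: j => [|j IH]; first by rewrite !expr0 mulmx1 scale1r.
  by rewrite exprSr -mulmxE mulmxA IH -scalemxAl vA scalerA -exprSr.
move: (vAk k); rewrite Ak mulmx0 => /esym/eqP.
by rewrite scaler_eq0 (negbTE nz_v) orbF expf_eq0 => /andP [_ /eqP].
Qed.

End FieldMatrixFacts.

Section ProblemMatrices.
Variables (R : realFieldType) (n N : nat).

Lemma shiftP_exp k :
  shiftP R N ^+ k = \matrix_(i, j) ((i : nat) == j + k)%N%:R.
Proof.
elim: k => [|k IH]; apply/matrixP => i j; first by rewrite expr0 !mxE addn0.
rewrite exprSr -mulmxE IH !mxE.
under eq_bigr => l _ do rewrite !mxE.
case: (ltnP j.+1 N) => [lt_jN | le_Nj].
  by rewrite sum_delta /= addSnnS.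
rewrite sum_delta_out //.
have /negbTE -> // : (i : nat) != (j + k.+1)%N.
by rewrite neq_ltn (leq_trans (ltn_ord i)) // (leq_trans le_Nj) // -addSnnS leq_addr.
Qed.

Lemma shiftP_nilpotent : shiftP R N ^+ N = 0.
Proof.
apply/matrixP => i j; rewrite shiftP_exp !mxE.
by have /negbTE -> : (i : nat) != (j + N)%N by rewrite neq_ltn ltn_addl.
Qed.

Lemma block_shift_nilpotent :
  (0 < N)%N -> tensmx (shiftP R N) (1%:M : 'M[R]_n) ^+ N = 0.
Proof.
by case: N shiftP_nilpotent => // N' PN _; rewrite tensmx_expS PN tens0mx.
Qed.

Notation E1 := (castmx (erefl, mul1n n) (tensmx (e1 R N) (1%:M : 'M[R]_n))).

Lemma e1_block_entry (j : 'I_(N * n)) (k : 'I_n) : E1 j k = ((j : nat) == k)%:R.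
Proof.
rewrite castmxE !mxE /= -val_eqE /= (modn_small (ltn_ord k)).
case: (ltnP j n) => [lt_jn | le_nj].
  by rewrite divn_small // modn_small // eqxx mul1r.
have -> : (j %/ n == 0)%N = false.
  by apply/negbTE; rewrite -lt0n divn_gt0 // (leq_ltn_trans (leq0n k) (ltn_ord k)).
have /negbTE -> : (j : nat) != k by rewrite neq_ltn (leq_trans (ltn_ord k) le_nj) orbT.
by rewrite mul0r.
Qed.

Lemma Zmx_index_lt (i : 'I_(n * (N - 1))) : (i + n < N * n)%N.
Proof.
move: (nat_of_ord i) (ltn_ord i) => j; case: N => [|N']; first by rewrite muln0.
by rewrite subSS subn0 mulSnr ltn_add2r mulnC.
Qed.

Lemma Zmx_e1 : Zmx R n N *m E1 = 0.
Proof.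
apply/matrixP => i k; rewrite !mxE.
under eq_bigr => j _ do rewrite e1_block_entry mxE mulrC.
rewrite (sum_delta _ (Zmx_index_lt i)) /=.
by have /negbTE -> : (i + n)%N != k by rewrite neq_ltn ltn_addl ?orbT.
Qed.

Lemma Zmx_coisometry : Zmx R n N *m (Zmx R n N)^T = 1%:M.
Proof.
apply/matrixP => i k; rewrite !mxE.
under eq_bigr => j _ do rewrite !mxE mulrC.
by rewrite (sum_delta _ (Zmx_index_lt i)) /= eqn_add2r.
Qed.

Lemma stacked_row_free (X : 'M[R]_(n, N * n)) :
  X *m E1 = 1%:M -> row_free (col_mx X (Zmx R n N)).
Proof.
move=> XE; apply/row_freeP; set Z := Zmx R n N.
exists (row_mx E1 (Z^T - E1 *m X *m Z^T)).
rewrite mul_col_row !mulmxBr !mulmxA XE Zmx_e1 Zmx_coisometry.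
by rewrite mul1mx subrr !mul0mx subr0 -scalar_mx_block.
Qed.

End ProblemMatrices.

Section ClosedLoop.
Variables (R : realFieldType) (n m k : nat).
Variables (A : 'M[R]_n) (B : 'M[R]_(n, m)).
Variables (K : 'M[R]_(m, n)) (H : 'M[R]_(m, k)) (G : 'M[R]_(k, n)) (F : 'M[R]_k).

Let Acl := block_mx (A + B *m K) (B *m H) G F.

Lemma closed_loop_intertwine q (X : 'M[R]_(n, q)) (U : 'M[R]_(m, q))
    (Z : 'M[R]_(k, q)) (S : 'M[R]_q) :
  A *m X + B *m U = X *m S ->
  block_mx K H G F *m col_mx X Z = col_mx U (Z *m S) ->
  Acl *m col_mx X Z = col_mx X Z *m S.
Proof.
move=> plant; rewrite !mul_block_col mul_col_mx => /eq_col_mx [KU GV].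
by rewrite mulmxDl -!mulmxA -addrA -mulmxDr KU plant GV.
Qed.

Lemma closed_loop_step (x : 'cV[R]_n) (z : 'cV[R]_k) :
  col_mx (A *m x + B *m (H *m z + K *m x)) (F *m z + G *m x) =
  Acl *m col_mx x z.
Proof.
rewrite mul_block_col mulmxDl mulmxDr !mulmxA; congr col_mx; last exact: addrC.
by rewrite [B *m H *m z + _]addrC addrA.
Qed.

End ClosedLoop.

Theorem corollary2 (R : realFieldType) (n m p N : nat)
  (A : 'M[R]_n) (B : 'M[R]_(n, m)) (C : 'M[R]_(p, n)) (D : 'M[R]_(p, m))
  (s : 'cV[R]_p) (X : 'M[R]_(n, N * n)) (U : 'M[R]_(m, N * n))
  (K : 'M[R]_(m, n)) (H : 'M[R]_(m, n * (N - 1)))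
  (G : 'M[R]_(n * (N - 1), n)) (F : 'M[R]_(n * (N - 1))) :
  (2 <= N)%N ->
  reachable A B ->
  minimizer1 A B C D s X U ->
  block_mx K H G F *m col_mx X (Zmx R n N) = col_mx U (Vmx R n N) ->
  let Acl := block_mx (A + B *m K) (B *m H) G F in
  [/\ Acl ^+ N = 0,
      (forall a : R, eigenvalue Acl a -> a = 0)
    & forall (x : nat -> 'cV[R]_n) (z : nat -> 'cV[R]_(n * (N - 1)))
             (u : nat -> 'cV[R]_m),
        (forall t, x t.+1 = A *m x t + B *m u t) ->
        (forall t, z t.+1 = F *m z t + G *m x t) ->
        (forall t, u t = H *m z t + K *m x t) ->
        forall t, (N <= t)%N -> x t = 0 /\ z t = 0].
Proof.
(* Only feasibility of (X, U) is used; V = Z S holds by definition. *)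
move=> le2N _ [[plant XE1 _] _] ctrl Acl.
have AclN : Acl ^+ N = 0.
  apply: (intertwine_nilpotent (stacked_row_free XE1)).
    exact: closed_loop_intertwine plant ctrl.
  by apply: block_shift_nilpotent; apply: ltn_trans le2N.
split=> [//||x z u xstep zstep uE t leNt].
  by move=> a; apply: nilpotent_eigenvalue AclN.
have step t' : col_mx (x t'.+1) (z t'.+1) = Acl *m col_mx (x t') (z t').
  by rewrite xstep zstep uE closed_loop_step.
move/eqP: (nilpotent_trajectory AclN step leNt).
by rewrite col_mx_eq0 => /andP [/eqP -> /eqP ->].
Qed.
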